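(* For every integer $n\ge1$, $M^L(n+2)\le 4K(n)$.
   Context: $\mathbb{F}=\{0,1\}$. The binary $n$-dimensional hypercube $\mathbb{F}^n$ is the graph on $\mathbb{F}^n$ where two words are adjacent iff their Hamming distance is $1$. For a nonempty $C\subseteq\mathbb{F}^n$, $I(\mathbf{x})=N[\mathbf{x}]\cap C$ with $N[\mathbf{x}]$ the words at Hamming distance $\le1$ from $\mathbf{x}$. $C$ is a covering code if $I(\mathbf{x})\ne\emptyset$ for all $\mathbf{x}\in\mathbb{F}^n$; $C$ is a local identifying code if it is covering and $I(\mathbf{x})\ne I(\mathbf{y})$ for all adjacent $\mathbf{x},\mathbf{y}$. $K(n)$ is the minimum cardinality of a covering code in $\mathbb{F}^n$, and $M^L(n)$ the minimum cardinality of a local identifying code in $\mathbb{F}^n$. *)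

From mathcomp Require Import all_boot.
Set Implicit Arguments. Unset Strict Implicit. Unset Printing Implicit Defensive.

(* Binary words of length n : the vertex set of the hypercube F^n. *)
Definition word (n : nat) : finType := {ffun 'I_n -> bool}.

Definition hdist n (x y : word n) : nat := #|[set i | x i != y i]|.

Definition cnbhd n (x : word n) : {set word n} := [set y | hdist x y <= 1].

Definition Iset n (C : {set word n}) (x : word n) : {set word n} := cnbhd x :&: C.

Definition covering_code n (C : {set word n}) : bool :=
  (C != set0) && [forall x : word n, Iset C x != set0].

Definition local_identifying_code n (C : {set word n}) : bool :=
  covering_code C &&
  [forall x : word n, forall y : word n, (hdist x y == 1) ==> (Iset C x != Iset C y)].

Lemma setT_covering n : covering_code [set: word n].
Proof.
apply/andP; split.
  by apply/set0Pn; exists [ffun => false]; rewrite inE.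
apply/forallP=> x; apply/set0Pn; exists x.
rewrite !inE andbT /hdist.
suff -> : [set i | x i != x i] = set0 by rewrite cards0.
by apply/setP=> i; rewrite !inE eqxx.
Qed.

Lemma K_exists n :
  exists k, [exists C : {set word n}, covering_code C && (#|C| == k)].
Proof.
exists #|[set: word n]|; apply/existsP; exists [set: word n].
by rewrite setT_covering eqxx.
Qed.

Definition K (n : nat) : nat := ex_minn (K_exists n).

From mathcomp Require Import all_boot zify.
Set Implicit Arguments. Unset Strict Implicit. Unset Printing Implicit Defensive.

(* Let C be a minimum covering code of F^n and, for m >= 2, let
   D be the set of words of F^(n+m) whose length-n prefix lies in C
   (i.e. D = C x F^m), so that #|D| = 2^m #|C|.
   To separate two adjacent words x and x' = flip x i we exhibit a code word
   w in D adjacent to x along a direction j <> i: then w is in I(x) but at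
   distance 2 from x', so I(x) <> I(x').  If prefix x is in C, flip x along a
   suffix direction j <> i (here m >= 2 is used); by symmetry the same works if
   prefix x' is in C; otherwise prefix x is at distance 1 from C along some
   prefix direction k, and k <> i because prefix x' is not in C. *)

Definition flip m (x : word m) (i : 'I_m) : word m :=
  [ffun k => if k == i then ~~ x k else x k].

Lemma flipK m (x : word m) i : flip (flip x i) i = x.
Proof. by apply/ffunP=> k; rewrite !ffunE; case: eqP => // _; rewrite negbK. Qed.

Lemma hdist_flip m (x : word m) i : hdist x (flip x i) = 1.
Proof.
rewrite /hdist -(cards1 i); apply: eq_card => k; rewrite !inE ffunE.
by case: (k == i); case: (x k).
Qed.

Lemma hdist_refl m (x : word m) : hdist x x = 0.
Proof.
by apply/eqP; rewrite cards_eq0; apply/eqP/setP=> k; rewrite !inE eqxx.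
Qed.

Lemma hdist1_flip m (x y : word m) : hdist x y = 1 -> exists i, y = flip x i.
Proof.
rewrite /hdist => /eqP/cards1P [i Hi]; exists i; apply/ffunP=> k; rewrite ffunE.
move/setP: Hi => /(_ k); rewrite !inE.
by case: (k == i); case: (x k); case: (y k).
Qed.

Lemma hdist_eq0 m (x y : word m) : hdist x y = 0 -> x = y.
Proof.
rewrite /hdist => /eqP; rewrite cards_eq0 => /eqP Hs; apply/ffunP=> k.
by move/setP: Hs => /(_ k); rewrite !inE => /negbFE/eqP.
Qed.

Lemma hdist_flip_flip m (x : word m) i j :
  i != j -> 1 < hdist (flip x i) (flip x j).
Proof.
move=> ij; have card_ij := cards2 i j; rewrite ij in card_ij.
rewrite /hdist -card_ij; apply: subset_leq_card; apply/subsetP=> k.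
have ji : j != i by rewrite eq_sym.
rewrite !inE !ffunE => /orP[]/eqP->; rewrite eqxx ?(negbTE ij) ?(negbTE ji);
  by case: (x _).
Qed.

(* Separation criterion: a code word adjacent to x along a direction j other
   than i lies in I(x) but not in I(flip x i). *)
Lemma flip_separates m (D : {set word m}) (x : word m) i j :
  j != i -> flip x j \in D -> Iset D x != Iset D (flip x i).
Proof.
move=> ji xjD; apply/negP=> /eqP sameI.
have : flip x j \in Iset D x by rewrite !inE hdist_flip xjD.
rewrite sameI !inE xjD andbT => far.
have ij : i != j by rewrite eq_sym.
by have := leq_trans (hdist_flip_flip x ij) far.
Qed.

Lemma covering_near m (C : {set word m}) (u : word m) :
  covering_code C -> u \in C \/ exists k, flip u k \in C.
Proof.
case/andP=> _ /forallP /(_ u) /set0Pn [c]; rewrite !inE => /andP[].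
rewrite leq_eqVlt ltnS leqn0 => /orP[]/eqP d_uc c_in.
  by have [k c_flip] := hdist1_flip d_uc; right; exists k; rewrite -c_flip.
by left; rewrite (hdist_eq0 d_uc).
Qed.

Section ProductCode.

Variables n m : nat.
Variable C : {set word n}.
Hypothesis C_covering : covering_code C.

Definition prefix (x : word (n + m)) : word n := [ffun k => x (lshift m k)].
Definition suffix (x : word (n + m)) : word m := [ffun k => x (rshift n k)].

Definition product_code : {set word (n + m)} := [set x | prefix x \in C].

Lemma prefix_flip_lshift x k : prefix (flip x (lshift m k)) = flip (prefix x) k.
Proof.
apply/ffunP=> j; rewrite !ffunE.
by congr (if _ then _ else _); apply/eqP/eqP=> [/lshift_inj|->].
Qed.

Lemma prefix_flip_rshift x j : prefix (flip x (rshift n j)) = prefix x.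
Proof.
apply/ffunP=> k; rewrite !ffunE.
by case: eqP => // /(congr1 val) /=; move: (ltn_ord k); lia.
Qed.

Lemma product_code_covers x : Iset product_code x != set0.
Proof.
apply/set0Pn; case: (covering_near (prefix x) C_covering) => [x_in|[k xk_in]].
  by exists x; rewrite !inE hdist_refl x_in.
by exists (flip x (lshift m k)); rewrite !inE hdist_flip prefix_flip_lshift xk_in.
Qed.

(* A word is determined by its prefix and suffix, so #|C x F^m| <= 2^m #|C|. *)
Lemma product_code_card : #|product_code| <= 2 ^ m * #|C|.
Proof.
pose split_word x := (prefix x, suffix x).
have split_inj : injective split_word.
  move=> x y [same_pre same_suf]; apply/ffunP=> k; rewrite -(splitK k).
  case: (split k) => j /=.
    by move/ffunP: same_pre => /(_ j); rewrite !ffunE.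
  by move/ffunP: same_suf => /(_ j); rewrite !ffunE.
rewrite -(card_imset _ split_inj) mulnC.
have -> : 2 ^ m = #|[set: word m]| by rewrite cardsT card_ffun card_bool card_ord.
rewrite -cardsX; apply: subset_leq_card; apply/subsetP=> z /imsetP[x].
by rewrite inE => x_in ->; rewrite !inE x_in.
Qed.

Hypothesis m_gt1 : 1 < m.

Lemma suffix_direction_avoiding (i : 'I_(n + m)) : exists j : 'I_m, rshift n j != i.
Proof.
pose j0 : 'I_m := Ordinal (ltnW m_gt1); pose j1 : 'I_m := Ordinal m_gt1.
have [->|i_ne] := eqVneq i (rshift n j0); last by exists j0; rewrite eq_sym.
by exists j1; apply/eqP=> /(congr1 val) /=; lia.
Qed.

(* If prefix x is a code word, flip x along a suffix direction. *)
Lemma separate_prefix_in x i :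
  prefix x \in C -> Iset product_code x != Iset product_code (flip x i).
Proof.
move=> x_in; have [j ji] := suffix_direction_avoiding i.
by apply: (flip_separates ji); rewrite inE prefix_flip_rshift.
Qed.

(* Otherwise flip x along the prefix direction that reaches C. *)
Lemma separate_prefix_out x i :
  prefix x \notin C -> prefix (flip x i) \notin C ->
  Iset product_code x != Iset product_code (flip x i).
Proof.
move=> x_out xi_out.
have [x_in|[k xk_in]] := covering_near (prefix x) C_covering.
  by rewrite x_in in x_out.
have ki : lshift m k != i.
  by apply/eqP=> ki; move: xi_out; rewrite -ki prefix_flip_lshift xk_in.
by apply: (flip_separates ki); rewrite inE prefix_flip_lshift.
Qed.

Lemma product_code_lic : local_identifying_code product_code.
Proof.
apply/andP; split.
  apply/andP; split; last by apply/forallP=> x; apply: product_code_covers.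
  have [w /setIP[_ w_in]] := set0Pn _ (product_code_covers [ffun => false]).
  by apply/set0Pn; exists w.
apply/forallP=> x; apply/forallP=> y; apply/implyP=> /eqP /hdist1_flip [i ->].
case x_in: (prefix x \in C); first exact: separate_prefix_in.
case xi_in: (prefix (flip x i) \in C).
  by rewrite eq_sym -{2}(flipK x i); apply: separate_prefix_in.
by apply: separate_prefix_out; rewrite ?x_in ?xi_in.
Qed.

End ProductCode.

Theorem mainTheorem8 (n : nat) (hn : 1 <= n) :
  exists C : {set word (n + 2)}, local_identifying_code C /\ #|C| <= 4 * K n.
Proof.
rewrite /K; case: ex_minnP => k /existsP [C /andP[C_covering /eqP card_C]] _.
exists (product_code 2 C); split.
  exact: product_code_lic.
by rewrite -card_C (product_code_card 2 C).
Qed.
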